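(* There is an absolute constant $C>0$ such that the following holds. Let $\langle\mathcal X,\mathcal C,d,\ell,(x_1,\dots,x_n)\rangle$ be a multiple facility location instance with $\mathcal X=[0,1]$ and $d(x,y)=|x-y|$, let $\epsilon\in(0,1)$, and let $k$ be an integer with $C/\epsilon^2\le k\le n$. Then $$\mathbb E_{S\sim\mathcal U_{k,n}}\big[\textsc{Social-Cost}(\overline y(S))\big]\le\textsc{Social-Opt}+\epsilon .$$
   Context: A multiple facility location instance $\langle\mathcal X,\mathcal C,d,\ell,(x_1,\dots,x_n)\rangle$ consists of a metric space $(\mathcal X,d)$, candidate locations $\mathcal C\subseteq\mathcal X$, a number $\ell\ge1$ of facilities and agent locations $x_1,\dots,x_n\in\mathcal X$. For $y=(y_1,\dots,y_\ell)\in\mathcal C^\ell$, agent $i$'s cost is $\mathrm{Cost}_i(y)=\min_{j\in[\ell]}d(x_i,y_j)$; $\textsc{Social-Cost}(y)=\frac1n\sum_i\mathrm{Cost}_i(y)$, $\textsc{Social-Opt}=\min_{y\in\mathcal C^\ell}\textsc{Social-Cost}(y)$, $\textsc{Panel-Cost}(y,S)=\frac1k\sum_{i\in S}\mathrm{Cost}_i(y)$, and $\overline y(S)\in\arg\min_{y\in\mathcal C^\ell}\textsc{Panel-Cost}(y,S)$ (minimizers assumed to exist). $\mathcal U_{k,n}$ is the uniform distribution over size-$k$ subsets of $[n]$. *)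

From HB Require Import structures.
From mathcomp Require Import all_boot all_order all_algebra.
From mathcomp Require Import Rstruct.
Set Implicit Arguments. Unset Strict Implicit. Unset Printing Implicit Defensive.
Import Order.TTheory GRing.Theory Num.Theory.
Local Open Scope ring_scope.
Notation real := Rdefinitions.R.

(* Facilities are indexed by 'I_l.+1, i.e. there are ell = l+1 >= 1 facilities. *)

Definition agent_cost (l : nat) (a : real) (y : 'I_l.+1 -> real) : real :=
  \big[Num.min/ `|a - y ord0|]_(j < l.+1) `|a - y j|.

Definition social_cost (n l : nat) (x : 'I_n -> real) (y : 'I_l.+1 -> real) : real :=
  (n%:R)^-1 * \sum_(i < n) agent_cost (x i) y.

Definition panel_cost (n l k : nat) (x : 'I_n -> real) (y : 'I_l.+1 -> real)
  (S : {set 'I_n}) : real :=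
  (k%:R)^-1 * \sum_(i in S) agent_cost (x i) y.

Definition in_cand (l : nat) (Cand : real -> Prop) (y : 'I_l.+1 -> real) : Prop :=
  forall j, Cand (y j).

Definition unif_expect (n k : nat) (f : {set 'I_n} -> real) : real :=
  ('C(n, k)%:R)^-1 * \sum_(S : {set 'I_n} | #|S| == k) f S.

From HB Require Import structures.
From mathcomp Require Import all_boot all_order all_algebra.
From mathcomp Require Import Rstruct ring lra zify.
Set Implicit Arguments. Unset Strict Implicit. Unset Printing Implicit Defensive.
Import Order.TTheory GRing.Theory Num.Theory.
Local Open Scope ring_scope.

(* Order the agents by location, v_0 <= ... <= v_(n-1).  Every cost function
   a |-> min_j |a - y_j| is 1-Lipschitz, so summation by parts bounds
   Social-Cost(y) - Panel-Cost(y, S) by sum_j (v_(j+1) - v_j) |D_j(S)|, where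
   D_j(S) is the population share minus the panel share of the j+1 leftmost
   agents.  This bound does not depend on y, and the panel optimum does at least
   as well on the panel as any candidate profile, so E[Social-Cost(ybar S)] is at
   most Social-Cost(y) + sum_j (v_(j+1) - v_j) E|D_j|.  Uniform k-subsets are
   negatively correlated, Pr[i, j in S] <= (k/n)^2 for i <> j, so E[D_j^2] <= 1/k
   and E|D_j| <= eps once k eps^2 >= 1; the gaps sum to at most 1, so C = 1. *)

Section DrawCounting.
Variable T : finType.
Local Notation n := #|T|.

(* Complementation maps these sets onto the (n - k)-subsets of ~: B. *)
Lemma card_draws_supset (B : {set T}) k : (k <= n)%N ->
  #|[set S : {set T} | B \subset S & #|S| == k]| = 'C(n - #|B|, n - k).
Proof.
move=> le_kn.
have -> : [set S : {set T} | B \subset S & #|S| == k]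
        = (@setC T) @^-1: [set A : {set T} | A \subset ~: B & #|A| == n - k]%N.
  apply/setP => S; rewrite !inE setCS; congr (_ && _).
  by apply/eqP/eqP; have := cardsC S; lia.
rewrite card_preimset; last exact: setC_inj.
by rewrite cards_draws [in #|~: B|]cardsCs setCK.
Qed.

Lemma card_draws_mem (i : T) k : (k <= n)%N ->
  (n * #|[set S : {set T} | i \in S & #|S| == k]| = k * 'C(n, k))%N.
Proof.
move=> le_kn.
have -> : [set S : {set T} | i \in S & #|S| == k]
        = [set S : {set T} | [set i] \subset S & #|S| == k].
  by apply/setP => S; rewrite !inE sub1set.
by rewrite card_draws_supset // cards1 subn1 mul_bin_down bin_sub // subKn.
Qed.

Lemma card_draws_mem2 (i j : T) k : i != j -> (k <= n)%N ->
  (n * (n - 1) * #|[set S : {set T} | (i \in S) && (j \in S) & #|S| == k]|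
    = k * (k - 1) * 'C(n, k))%N.
Proof.
move=> ij le_kn.
have -> : [set S : {set T} | (i \in S) && (j \in S) & #|S| == k]
        = [set S : {set T} | [set i; j] \subset S & #|S| == k].
  by apply/setP => S; rewrite !inE subUset !sub1set.
rewrite card_draws_supset // cards2 ij /= subn2 !subn1 -mulnA mul_bin_down.
rewrite mulnCA mul_bin_down bin_sub // subKn //.
have -> : (n.-1 - (n - k) = k.-1)%N by lia.
by rewrite mulnCA mulnA.
Qed.

End DrawCounting.

Lemma natr_card_setI (T : finType) (A S : {set T}) :
  (#|A :&: S|%:R : real) = \sum_(i in A) (i \in S)%:R.
Proof.
rewrite -sum1_card natr_sum (eq_bigl (fun i => (i \in A) && (i \in S))) => [|i];
  last by rewrite inE.
by rewrite big_mkcondr; apply: eq_bigr => i _; case: (i \in S).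
Qed.

Lemma normr_le_amgm (R : realFieldType) (a e : R) : 0 < e ->
  `|a| <= (2 * e)^-1 * a ^+ 2 + e / 2.
Proof.
move=> e_gt0; rewrite -subr_ge0.
have -> : (2 * e)^-1 * a ^+ 2 + e / 2 - `|a| = (2 * e)^-1 * (`|a| - e) ^+ 2.
  by rewrite -[a ^+ 2](real_normK (num_real a)); field; rewrite lt0r_neq0.
by rewrite mulr_ge0 ?sqr_ge0 // invr_ge0 mulr_ge0 ?ltW.
Qed.

Definition sample_dev n k (A S : {set 'I_n}) : real :=
  #|A|%:R / n%:R - #|A :&: S|%:R / k%:R.

Section UniformExpectation.
Variables n k : nat.
Local Notation E := (@unif_expect n k).

Lemma eq_unif_expect (f g : {set 'I_n} -> real) :
  (forall S, f S = g S) -> E f = E g.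
Proof. by move=> fg; rewrite /unif_expect; under eq_bigr do rewrite fg. Qed.

Lemma unif_expectD (f g : {set 'I_n} -> real) :
  E (fun S => f S + g S) = E f + E g.
Proof. by rewrite /unif_expect big_split mulrDr. Qed.

Lemma unif_expectZ (a : real) (f : {set 'I_n} -> real) :
  E (fun S => a * f S) = a * E f.
Proof. by rewrite /unif_expect -mulr_sumr mulrCA. Qed.

Lemma unif_expect_sum (I : Type) (r : seq I) (P : pred I)
    (F : I -> {set 'I_n} -> real) :
  E (fun S => \sum_(i <- r | P i) F i S) = \sum_(i <- r | P i) E (F i).
Proof. by rewrite /unif_expect exchange_big mulr_sumr. Qed.

Lemma ler_unif_expect (f g : {set 'I_n} -> real) :
  (forall S : {set 'I_n}, #|S| = k -> f S <= g S) -> E f <= E g.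
Proof.
move=> fg; apply: ler_wpM2l; first by rewrite invr_ge0 ler0n.
by apply: ler_sum => S card_S; apply/fg/eqP.
Qed.

Lemma unif_expect_indicator (P : pred {set 'I_n}) :
  E (fun S => (P S)%:R) = #|[set S | P S & #|S| == k]|%:R / 'C(n, k)%:R.
Proof.
rewrite /unif_expect mulrC; congr (_ * _).
transitivity (\sum_(S : {set 'I_n} | (#|S| == k) && P S) (1 : real)).
  by rewrite big_mkcondr; apply: eq_bigr => S _; case: (P S).
by rewrite sumr_const; congr _%:R; apply: eq_card => S; rewrite inE andbC.
Qed.

Hypothesis le_kn : (k <= n)%N.

Lemma unif_expect_cst (c : real) : E (fun=> c) = c.
Proof.
rewrite (eq_unif_expect (g := fun=> c * true%:R)) => [|S]; last by rewrite mulr1.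
rewrite unif_expectZ (unif_expect_indicator xpredT).
have -> : [set S : {set 'I_n} | xpredT S & #|S| == k] = [set S : {set 'I_n} | #|S| == k].
  by apply/setP => S; rewrite !inE.
by rewrite card_draws card_ord divff ?mulr1 // pnatr_eq0 -lt0n bin_gt0.
Qed.

Lemma unif_expect_mem (i : 'I_n) : E (fun S => (i \in S)%:R) = k%:R / n%:R.
Proof.
have n_gt0 : (0 < n)%N := leq_ltn_trans (leq0n i) (ltn_ord i).
have count_mem : n%:R * #|[set S : {set 'I_n} | i \in S & #|S| == k]|%:R
                 = k%:R * 'C(n, k)%:R :> real.
  by rewrite -!natrM; congr _%:R; have := card_draws_mem i (k := k); rewrite card_ord; apply.
rewrite unif_expect_indicator; apply/eqP.
by rewrite eqr_div ?pnatr_eq0 -?lt0n ?bin_gt0 // mulrC count_mem.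
Qed.

Lemma unif_expect_mem2_le (i j : 'I_n) :
  E (fun S => ((i \in S) && (j \in S))%:R)
    <= (i == j)%:R * (k%:R / n%:R) + (k%:R / n%:R) ^+ 2.
Proof.
have [<- | ij] := eqVneq i j.
  rewrite (eq_unif_expect (g := fun S => (i \in S)%:R)) => [|S]; last by rewrite andbb.
  by rewrite unif_expect_mem mul1r lerDl sqr_ge0.
have n_ge2 : (1 < n)%N by rewrite -(card_ord n); apply/card_gt1P; exists i, j.
rewrite mul0r add0r (unif_expect_indicator (fun S => (i \in S) && (j \in S))).
set N := #|_|.
have count_mem2 : (n * (n - 1) * N = k * (k - 1) * 'C(n, k))%N.
  by have := card_draws_mem2 ij (k := k); rewrite card_ord; apply.
have count_le : (N * n ^ 2 <= k ^ 2 * 'C(n, k))%N.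
  (* k (k - 1) / (n (n - 1)) <= (k / n)^2 precisely because k <= n *)
  have le_nk : (n * (k - 1) <= (n - 1) * k)%N by nia.
  have := leq_mul (leqnn (k * 'C(n, k))) le_nk.
  have := congr1 (muln n) count_mem2.
  rewrite -(leq_pmul2l (_ : 0 < n - 1)%N); last by lia.
  nia.
rewrite expr_div_n ler_pdivrMr ?ltr0n ?bin_gt0 // mulrAC.
by rewrite ler_pdivlMr ?exprn_gt0 ?ltr0n ?(ltnW n_ge2) // -!natrX -!natrM ler_nat.
Qed.

Local Notation p := (k%:R / n%:R : real).

Lemma unif_expect_card_setI (A : {set 'I_n}) :
  E (fun S => #|A :&: S|%:R) = #|A|%:R * p.
Proof.
rewrite (eq_unif_expect (g := fun S => \sum_(i in A) (i \in S)%:R)) => [|S];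
  last exact: natr_card_setI.
by rewrite unif_expect_sum (eq_bigr _ (fun i _ => unif_expect_mem i)) sumr_const [RHS]mulr_natl.
Qed.

Lemma unif_expect_card_setI_sqr_le (A : {set 'I_n}) :
  E (fun S => #|A :&: S|%:R ^+ 2) <= #|A|%:R * p + (#|A|%:R * p) ^+ 2.
Proof.
rewrite (eq_unif_expect
  (g := fun S => \sum_(i in A) \sum_(j in A) ((i \in S) && (j \in S))%:R)) => [|S]; last first.
  rewrite natr_card_setI expr2 mulr_suml; apply: eq_bigr => i _.
  by rewrite mulr_sumr; apply: eq_bigr => j _; rewrite -mulnb natrM.
rewrite unif_expect_sum; under eq_bigr do rewrite unif_expect_sum.
suff <- : \sum_(i in A) \sum_(j in A) ((i == j)%:R * p + p ^+ 2)
          = #|A|%:R * p + (#|A|%:R * p) ^+ 2.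
  by apply: ler_sum => i _; apply: ler_sum => j _; exact: unif_expect_mem2_le.
transitivity (\sum_(i in A) (p + #|A|%:R * p ^+ 2)).
  apply: eq_bigr => i iA; rewrite big_split /=.
  congr (_ + _); last by rewrite sumr_const [RHS]mulr_natl.
  rewrite (bigD1 i iA) /= eqxx mul1r big1 ?addr0 // => j /andP[_ ji].
  by rewrite eq_sym (negbTE ji) mul0r.
by rewrite sumr_const -[_ *+ #|A|]mulr_natl; ring.
Qed.

Lemma unif_expect_sample_dev_sqr_le (A : {set 'I_n}) : (0 < k)%N ->
  E (fun S => sample_dev k A S ^+ 2) <= k%:R^-1.
Proof.
move=> k_gt0; have n_gt0 : (0 < n)%N by apply: leq_trans le_kn.
have kR_gt0 : (0 : real) < k%:R by rewrite ltr0n.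
have nR_gt0 : (0 : real) < n%:R by rewrite ltr0n.
set a : real := #|A|%:R.
rewrite (eq_unif_expect (g := fun S => (a / n%:R) ^+ 2 +
  (- (2 * a / n%:R / k%:R) * #|A :&: S|%:R + (k%:R^-1) ^+ 2 * #|A :&: S|%:R ^+ 2)))
  => [|S]; last by rewrite /sample_dev; ring.
rewrite unif_expectD unif_expect_cst unif_expectD !unif_expectZ unif_expect_card_setI.
have := ler_wpM2l (sqr_ge0 k%:R^-1) (unif_expect_card_setI_sqr_le A); rewrite -/a.
have : a / n%:R / k%:R <= k%:R^-1.
  rewrite ler_pdivrMr // mulVf ?lt0r_neq0 // ler_pdivrMr // mul1r ler_nat.
  by rewrite -[n in (_ <= n)%N]card_ord max_card.
suff : (a / n%:R) ^+ 2 + (- (2 * a / n%:R / k%:R) * (a * p)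
         + (k%:R^-1) ^+ 2 * (a * p + (a * p) ^+ 2)) = a / n%:R / k%:R by lra.
by field; rewrite !lt0r_neq0.
Qed.

Lemma unif_expect_norm_sample_dev_le (A : {set 'I_n}) (e : real) :
  (0 < k)%N -> 0 < e -> 1 <= k%:R * e ^+ 2 ->
  E (fun S => `|sample_dev k A S|) <= e.
Proof.
move=> k_gt0 e_gt0 ke2_ge1.
apply: le_trans (ler_unif_expect (fun S _ => normr_le_amgm _ e_gt0)) _.
rewrite unif_expectD unif_expect_cst unif_expectZ.
have inv_k_le : k%:R^-1 <= e ^+ 2 by rewrite -[k%:R^-1]div1r ler_pdivrMr ?ltr0n // mulrC.
have e2_ge0 : 0 <= (2 * e)^-1 by rewrite invr_ge0 mulr_ge0 // ltW.
have := ler_wpM2l e2_ge0 (le_trans (unif_expect_sample_dev_sqr_le A k_gt0) inv_k_le).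
have -> : (2 * e)^-1 * e ^+ 2 = e / 2 by field; rewrite lt0r_neq0.
lra.
Qed.

End UniformExpectation.

Lemma summation_by_parts (R : comPzRingType) (m F : nat -> R) N :
  \sum_(j < N.+1) m j * F j =
  \sum_(j < N) (\sum_(t < j.+1) m t) * (F j - F j.+1) + (\sum_(t < N.+1) m t) * F N.
Proof.
elim: N => [|N IH]; first by rewrite !big_ord1 big_ord0 add0r.
rewrite big_ord_recr /= IH [in RHS]big_ord_recr /= [\sum_(t < N.+2) m t]big_ord_recr /=.
ring.
Qed.

Lemma norm_sum_by_parts_le (R : numDomainType) (m F v : nat -> R) N :
  \sum_(t < N) m t = 0 ->
  (forall j, (j.+1 < N)%N -> `|F j - F j.+1| <= v j.+1 - v j) ->
  `|\sum_(j < N) m j * F j| <= \sum_(j < N.-1) (v j.+1 - v j) * `|\sum_(t < j.+1) m t|.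
Proof.
case: N => [_ _|N m0 F_lip]; first by rewrite !big_ord0 normr0.
rewrite summation_by_parts m0 mul0r addr0 /=.
apply: le_trans (ler_norm_sum _ _ _) _; apply: ler_sum => j _.
by rewrite normrM mulrC; apply: ler_wpM2r => //; apply: F_lip; rewrite ltnS.
Qed.

Lemma agent_cost_le l a (y : 'I_l.+1 -> real) j : agent_cost a y <= `|a - y j|.
Proof. by rewrite /agent_cost (bigD1 j) //= ge_min lexx. Qed.

Lemma agent_cost_attained l a (y : 'I_l.+1 -> real) :
  exists j, agent_cost a y = `|a - y j|.
Proof.
rewrite /agent_cost; apply: (big_ind (fun c => exists j, c = `|a - y j|)).
- by exists ord0.
- by move=> _ _ [j ->] [j' ->]; rewrite minEle; case: ifP => _; eexists.
- by move=> j _; exists j.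
Qed.

Lemma agent_cost_lipschitz l a b (y : 'I_l.+1 -> real) :
  `|agent_cost a y - agent_cost b y| <= `|a - b|.
Proof.
have le_cost a' b' : agent_cost a' y <= agent_cost b' y + `|a' - b'|.
  have [j ->] := agent_cost_attained b' y.
  apply: le_trans (agent_cost_le a' y j) _.
  by rewrite [X in _ <= X]addrC; exact: ler_distD.
have := le_cost a b; have := le_cost b a; rewrite distrC ler_norml; lra.
Qed.

Section SortedLocations.
Variables (n : nat) (x : 'I_n -> real).

Definition location_order : seq 'I_n := sort (fun i j => x i <= x j) (enum 'I_n).

Definition sorted_location (j : nat) : real := nth 0 [seq x i | i <- location_order] j.

Definition leftmost (j : nat) : {set 'I_n} := [set i in take j.+1 location_order].

Lemma size_location_order : size location_order = n.
Proof. by rewrite size_sort size_enum_ord. Qed.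

Lemma uniq_location_order : uniq location_order.
Proof. by rewrite sort_uniq enum_uniq. Qed.

Lemma big_location_order (g : 'I_n -> real) :
  \sum_(i <- location_order) g i = \sum_i g i.
Proof. by rewrite (perm_big _ (permEl (perm_sort _ _))) big_enum. Qed.

Lemma sorted_location_step j : (j.+1 < n)%N -> sorted_location j <= sorted_location j.+1.
Proof.
move=> lt_jn; have : sorted <=%R [seq x i | i <- location_order].
  by rewrite sorted_map; apply: sort_sorted => i i'; exact: le_total.
by move/(sortedP 0); apply; rewrite size_map size_location_order.
Qed.

Lemma sorted_location_bound j :
  (forall i, 0 <= x i <= 1) -> 0 <= sorted_location j <= 1.
Proof.
move=> x01; rewrite /sorted_location.
case: (ltnP j (size [seq x i | i <- location_order])) => [/(mem_nth 0)/mapP[i _ ->] //|].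
by move/(nth_default 0) ->; rewrite lexx ler01.
Qed.

End SortedLocations.

Definition sampling_error n k (x : 'I_n -> real) (S : {set 'I_n}) : real :=
  \sum_(j < n.-1) (sorted_location x j.+1 - sorted_location x j)
                    * `|sample_dev k (leftmost x j) S|.

Section SamplingError.
Variables (n k : nat) (x : 'I_n -> real).

Lemma social_cost_sub_panel_cost l (y : 'I_l.+1 -> real) (S : {set 'I_n}) :
  social_cost x y - panel_cost k x y S
    = \sum_i (n%:R^-1 - (i \in S)%:R / k%:R) * agent_cost (x i) y.
Proof.
rewrite /social_cost /panel_cost [in X in _ - X]big_mkcond !mulr_sumr -sumrB /=.
by apply: eq_bigr => i _; case: (i \in S); rewrite /= ?mul1r ?mul0r; ring.
Qed.

Lemma sum_sample_weights (A S : {set 'I_n}) :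
  \sum_(i in A) (n%:R^-1 - (i \in S)%:R / k%:R) = sample_dev k A S.
Proof.
by rewrite sumrB sumr_const -mulr_suml -natr_card_setI /sample_dev -[_ *+ #|A|]mulr_natl.
Qed.

Lemma social_cost_le_panel_cost_add l (y : 'I_l.+1 -> real) (S : {set 'I_n}) :
  (0 < k)%N -> #|S| = k ->
  social_cost x y <= panel_cost k x y S + sampling_error k x S.
Proof.
move=> k_gt0 card_S.
have n_gt0 : (0 < n)%N.
  by apply: leq_trans k_gt0 _; rewrite -card_S -[n in (_ <= n)%N]card_ord max_card.
pose i0 := Ordinal n_gt0; pose s := location_order x.
pose w i : real := n%:R^-1 - (i \in S)%:R / k%:R.
have sum_s (g : 'I_n -> real) : \sum_i g i = \sum_(j < n) g (nth i0 s j).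
  by rewrite -(big_location_order x) (big_nth i0) size_location_order big_mkord.
have loc j : (j < n)%N -> sorted_location x j = x (nth i0 s j).
  by move=> lt_jn; rewrite /sorted_location (nth_map i0) ?size_location_order.
have prefix j : (j < n)%N -> \sum_(t < j.+1) w (nth i0 s t) = sample_dev k (leftmost x j) S.
  move=> lt_jn; rewrite -sum_sample_weights /leftmost.
  rewrite (eq_bigl (mem (take j.+1 s))) => [|i]; last by rewrite inE.
  rewrite -big_uniq ?take_uniq ?uniq_location_order // (big_nth i0) size_takel.
    by rewrite big_mkord; apply: eq_bigr => t _; rewrite nth_take.
  by rewrite size_location_order.
rewrite -lerBlDl social_cost_sub_panel_cost sum_s; apply: le_trans (ler_norm _) _.
apply: le_trans (norm_sum_by_parts_le (m := fun j => w (nth i0 s j))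
  (F := fun j => agent_cost (x (nth i0 s j)) y) (v := fun j => x (nth i0 s j)) _ _) _.
- rewrite -(sum_s w) (eq_bigl (fun i => i \in [set: 'I_n])) => [|i]; last by rewrite in_setT.
  rewrite sum_sample_weights /sample_dev cardsT card_ord setTI card_S.
  by rewrite !divff ?subrr // pnatr_eq0 -lt0n.
- move=> j lt_jn; apply: le_trans (agent_cost_lipschitz _ _ _) _.
  rewrite -(loc j) ?(ltnW lt_jn) // -(loc j.+1) //.
  by rewrite ler0_norm ?opprB // subr_le0 sorted_location_step.
- apply: ler_sum => j _; have lt_jn : (j.+1 < n)%N by have := ltn_ord j; lia.
  by rewrite -(loc j) ?(ltnW lt_jn) // -(loc j.+1) // prefix // ltnW.
Qed.

Lemma unif_expect_sampling_error_le (e : real) :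
  (forall i, 0 <= x i <= 1) -> (0 < k)%N -> (k <= n)%N -> 0 < e -> 1 <= k%:R * e ^+ 2 ->
  unif_expect k (sampling_error k x) <= e.
Proof.
move=> x01 k_gt0 le_kn e_gt0 ke2_ge1.
rewrite /sampling_error unif_expect_sum; under eq_bigr do rewrite unif_expectZ.
apply: le_trans (_ : _ <= \sum_(j < n.-1)
  (sorted_location x j.+1 - sorted_location x j) * e) _.
  apply: ler_sum => j _; apply: ler_wpM2l; last exact: unif_expect_norm_sample_dev_le.
  by rewrite subr_ge0 sorted_location_step //; have := ltn_ord j; lia.
rewrite -mulr_suml -(big_mkord xpredT (fun j => sorted_location x j.+1 - sorted_location x j)).
rewrite telescope_sumr //.
have := sorted_location_bound n.-1 x01; have := sorted_location_bound 0 x01.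
move=> /andP[? ?] /andP[? ?]; nra.
Qed.

Lemma unif_expect_panel_cost l (y : 'I_l.+1 -> real) :
  (0 < k)%N -> (k <= n)%N -> unif_expect k (panel_cost k x y) = social_cost x y.
Proof.
move=> k_gt0 le_kn; have n_gt0 : (0 < n)%N by apply: leq_trans le_kn.
rewrite (eq_unif_expect k (g := fun S => \sum_i
  (k%:R^-1 * agent_cost (x i) y) * (i \in S)%:R)) => [|S]; last first.
  rewrite /panel_cost big_mkcond mulr_sumr; apply: eq_bigr => i _.
  by case: (i \in S); rewrite ?mulr1 ?mulr0.
rewrite unif_expect_sum /social_cost mulr_sumr; apply: eq_bigr => i _.
rewrite unif_expectZ unif_expect_mem //; field.
by rewrite !pnatr_eq0 -!lt0n k_gt0 n_gt0.
Qed.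

End SamplingError.

Theorem theorem4p14 :
  exists C : real, 0 < C /\
  forall (n l k : nat) (x : 'I_n -> real) (Cand : real -> Prop) (eps : real)
    (ybar : {set 'I_n} -> 'I_l.+1 -> real) (ystar : 'I_l.+1 -> real),
    (forall i, 0 <= x i <= 1) ->
    (forall c, Cand c -> 0 <= c <= 1) ->
    0 < eps < 1 ->
    C / eps ^+ 2 <= k%:R ->
    (k <= n)%N ->
    (* ybar S is a minimizer of Panel-Cost(., S) over C^ell, for every S of size k *)
    (forall S : {set 'I_n}, #|S| = k ->
       in_cand Cand (ybar S) /\
       forall y : 'I_l.+1 -> real, in_cand Cand y -> panel_cost k x (ybar S) S <= panel_cost k x y S) ->
    (* ystar attains Social-Opt *)
    in_cand Cand ystar ->
    (forall y : 'I_l.+1 -> real, in_cand Cand y -> social_cost x ystar <= social_cost x y) ->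
    unif_expect k (fun S => social_cost x (ybar S)) <= social_cost x ystar + eps.
Proof.
exists 1; split; first exact: ltr01.
(* The bound holds against every candidate profile. *)
move=> n l k x Cand eps ybar ystar x01 _ /andP[eps_gt0 _] k_large le_kn ybar_opt ystar_cand _.
have ke2_ge1 : 1 <= k%:R * eps ^+ 2 by rewrite -ler_pdivrMr ?exprn_gt0.
have k_gt0 : (0 < k)%N by rewrite lt0n; apply/eqP => k0; move: ke2_ge1; rewrite k0 mul0r; lra.
apply: le_trans (ler_unif_expect
  (g := fun S => panel_cost k x ystar S + sampling_error k x S) _) _.
  move=> S card_S; apply: le_trans (social_cost_le_panel_cost_add _ _ k_gt0 card_S) _.
  by rewrite lerD2r; apply: (ybar_opt S card_S).2.
by rewrite unif_expectD unif_expect_panel_cost // lerD2l unif_expect_sampling_error_le.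
Qed.
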